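(* Let $k\ge2$, $\beta>0$, $J,B\in\mathbb{R}$, $\theta=\tanh(\beta J)$, $f_\theta(h)=\operatorname{arctanh}(\theta\tanh h)$, and let $h\in\mathbb{R}$ be a solution of $h=k f_\theta(h+\beta B)$. For the translation-invariant boundary condition $h_x=h$ for all $x\in V$, the free energy $F(h)=-\lim_{n\to\infty}\frac{1}{\beta|V_n|}\ln Z_n(h)$ exists and $$F(h)=-\frac{1}{2\beta}\ln\big[4\cosh(h+\beta(B+J))\cosh(h+\beta(B-J))\big].$$
   Context: $\Gamma^k=(V,L)$ is the Cayley tree in which every vertex has $k+1$ neighbours; $x^0\in V$ is a fixed root, $d$ the graph distance, $V_n=\{x:d(x,x^0)\le n\}$, $W_n=\{x:d(x,x^0)=n\}$. For a boundary condition $h=\{h_x\in\mathbb{R}\}_{x\in V}$, $$Z_n(h)=\sum_{\sigma\in\{-1,1\}^{V_n}}\exp\Big\{\beta J\sum_{\langle x,y\rangle\subset V_n}\sigma(x)\sigma(y)+\beta B\sum_{x\in V_n}\sigma(x)+\sum_{x\in W_n}h_x\sigma(x)\Big\},$$ the first sum running over nearest-neighbour pairs with both endpoints in $V_n$. *)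

From HB Require Import structures.
From mathcomp Require Import all_boot all_order all_algebra.
From mathcomp Require Import all_classical all_reals all_analysis.
Set Implicit Arguments. Unset Strict Implicit. Unset Printing Implicit Defensive.
Import Order.TTheory GRing.Theory Num.Theory.
Local Open Scope ring_scope.

Definition cosh {R : realType} (x : R) : R := (expR x + expR (- x)) / 2.
Definition tanh {R : realType} (x : R) : R :=
  (expR x - expR (- x)) / (expR x + expR (- x)).
Definition artanh {R : realType} (x : R) : R := ln ((1 + x) / (1 - x)) / 2.

Definition f_theta {R : realType} (theta h : R) : R := artanh (theta * tanh h).

(* ---------------- The Cayley tree Gamma^k ----------------
   A vertex is the (reversed) word of the unique non-backtracking path from
   the root x^0 = [::] : the word [:: a_m; ...; a_1] denotes the vertex reached
   by first going to the a_1-th neighbour of the root (a_1 < k+1), then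
   successively to the a_2-th, ..., a_m-th child (a_i < k for i >= 2).
   The parent of a nonempty word is its [behead]; the root has k+1 neighbours,
   every other vertex has k children plus its parent, i.e. k+1 neighbours.
   d(x, x^0) = size x. *)
Fixpoint cayley_word {k : nat} (s : seq 'I_k.+1) : bool :=
  match s with
  | [::] => true
  | [:: _] => true
  | a :: t => (a < k)%N && cayley_word t
  end.

(* y is a child of x (so {x,y} is an edge; every edge is obtained exactly once) *)
Definition cayley_child (k : nat) (x y : seq 'I_k.+1) : bool :=
  (y != [::]) && (behead y == x).

Definition Vn (k n : nat) : finType := {s : n.-bseq 'I_k.+1 | @cayley_word k s}.

Definition vword {k n : nat} (x : Vn k n) : seq 'I_k.+1 := val (val x).

Definition spin {R : realType} (b : bool) : R := if b then 1 else -1.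

(* Z_n(h) : configurations sigma in {-1,1}^{V_n}, encoded by booleans via spin *)
Definition Zn {R : realType} (k : nat) (beta J B : R) (h : seq 'I_k.+1 -> R)
    (n : nat) : R :=
  \sum_(sigma : {ffun Vn k n -> bool})
    expR (beta * J * (\sum_(x : Vn k n) \sum_(y : Vn k n | cayley_child (vword x) (vword y))
                        spin (sigma x) * spin (sigma y))
          + beta * B * (\sum_(x : Vn k n) spin (sigma x))
          + \sum_(x : Vn k n | size (vword x) == n) h (vword x) * spin (sigma x)).
Arguments Zn {R} k beta J B h n.

(* Since h = k f, the boundary field can be redistributed along the edges: an
   edge from x to its child y gets the weight  beta J s_x s_y + (h + beta B) s_y - f s_x,
   and what remains is a field beta B + h + f at the root.  The fixed-point equation
   says exactly that the sum of exp(weight) over s_y is a constant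
   a = 2 e^-f cosh(h + beta B + beta J), whatever s_x is.  Summing out the spins leaf
   by leaf therefore gives  Z_n = a^(|V_n| - 1) * 2 cosh(beta B + h + f),  so
   ln Z_n = |V_n| ln a + O(1), and the limit is  -ln a / beta  with
   a^2 = 4 cosh(h + beta (B + J)) cosh(h + beta (B - J)). *)

From HB Require Import structures.
From mathcomp Require Import all_boot all_order all_algebra.
From mathcomp Require Import all_classical all_reals all_analysis.
From mathcomp Require Import ring.
Import Order.TTheory GRing.Theory Num.Theory numFieldNormedType.Exports.
Set Implicit Arguments. Unset Strict Implicit.
Local Open Scope ring_scope.

Section CayleyBall.
Variables k n : nat.
Local Notation V := (Vn k n).

Lemma vword_inj : injective (@vword k n).
Proof. by move=> x y /val_inj /val_inj. Qed.

Lemma size_vword (x : V) : (size (vword x) <= n)%N.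
Proof. exact: size_bseq. Qed.

Lemma cayley_word_vword (x : V) : cayley_word (vword x).
Proof. exact: valP x. Qed.

Lemma cayley_word_cons (a : 'I_k.+1) w :
  cayley_word (a :: w) = (w == [::]) || ((a < k)%N && cayley_word w).
Proof. by case: w. Qed.

Lemma cayley_word_behead w : @cayley_word k w -> cayley_word (behead w).
Proof. by case: w => [|a [|b t]] //= /andP[]. Qed.

Definition mkV w (Hs : (size w <= n)%N) (Hc : cayley_word w) : V :=
  exist (fun s : n.-bseq 'I_k.+1 => cayley_word s) (Bseq Hs) Hc.

Definition vroot : V := @mkV [::] (leq0n n) erefl.

Lemma size_behead_vword (x : V) : (size (behead (vword x)) <= n)%N.
Proof. by rewrite size_behead (leq_trans (leq_pred _)) ?size_vword. Qed.

Definition vparent (x : V) : V :=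
  mkV (size_behead_vword x) (cayley_word_behead (cayley_word_vword x)).

Lemma vword_vparent x : vword (vparent x) = behead (vword x).
Proof. by []. Qed.

Lemma vword_eq0 x : (vword x == [::]) = (x == vroot).
Proof. by rewrite -[[::]]/(vword vroot) (inj_eq vword_inj). Qed.

Lemma size_vparent_lt y :
  y != vroot -> (size (vword (vparent y)) < size (vword y))%N.
Proof. by rewrite -vword_eq0 vword_vparent size_behead; case: (vword y). Qed.

Lemma cayley_childE x y :
  cayley_child (vword x) (vword y) = (y != vroot) && (vparent y == x).
Proof.
by rewrite /cayley_child vword_eq0 -vword_vparent (inj_eq vword_inj).
Qed.

Lemma sum_edges (M : nmodType) (F : V -> V -> M) :
  \sum_x \sum_(y | cayley_child (vword x) (vword y)) F x y =
  \sum_(y | y != vroot) F (vparent y) y.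
Proof.
under eq_bigr => x _ do rewrite big_mkcond /=.
rewrite exchange_big /= [RHS]big_mkcond /=; apply: eq_bigr => y _.
under eq_bigr => x _ do rewrite cayley_childE.
case: (y != vroot) => /=; last by rewrite big1.
by rewrite -big_mkcond /= (big_pred1 (vparent y)) // => z; rewrite eq_sym.
Qed.

Definition children (x : V) : {set V} := [set y | (y != vroot) && (vparent y == x)].

Definition nchildren (x : V) : nat :=
  if (size (vword x) < n)%N then (if vword x == [::] then k.+1 else k) else 0.

Lemma vword_child x y : y \in children x -> vword y = head ord0 (vword y) :: vword x.
Proof.
rewrite inE => /andP[ny /eqP <-].
by move: ny; rewrite -vword_eq0 vword_vparent; case: (vword y).
Qed.

Lemma children_heads x : (size (vword x) < n)%N ->
  [set head ord0 (vword y) | y in children x] =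
  [set a : 'I_k.+1 | (vword x == [::]) || (a < k)%N].
Proof.
move=> hx; apply/setP => a; rewrite inE; apply/imsetP/idP.
- case=> y hy ->; have := cayley_word_vword y.
  by rewrite (vword_child hy) cayley_word_cons => /orP[-> | /andP[-> _]] //; rewrite orbT.
- move=> ha; have Hs : (size (a :: vword x) <= n)%N by [].
  have Hc : cayley_word (a :: vword x).
    by rewrite cayley_word_cons; case/orP: ha => ->; rewrite ?cayley_word_vword ?orbT.
  exists (mkV Hs Hc) => //; rewrite inE -vword_eq0 /=.
  by apply/eqP/vword_inj.
Qed.

Lemma card_ord_below_max : #|[set a : 'I_k.+1 | (a < k)%N]| = k.
Proof.
rewrite (_ : [set a | _] = [set~ ord_max]) ?cardsC1 ?card_ord //.
by apply/setP => a; rewrite !inE -val_eqE /= ltn_neqAle -ltnS ltn_ord andbT.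
Qed.

Lemma card_children x : #|children x| = nchildren x.
Proof.
rewrite /nchildren; case: ltnP => hx.
  have head_inj : {in children x &, injective (fun y => head ord0 (vword y))}.
    move=> y1 y2 h1 h2 e.
    by apply: vword_inj; rewrite (vword_child h1) (vword_child h2) e.
  rewrite -(card_in_imset head_inj) children_heads //.
  case: eqP => _; last exact: card_ord_below_max.
  by rewrite -[RHS]card_ord -cardsT; apply: eq_card => a; rewrite !inE.
apply/eqP; rewrite cards_eq0; apply/set0Pn => -[y hy].
have := size_vword y.
by rewrite (vword_child hy) /= ltnNge hx.
Qed.

Lemma sum_over_parents (M : nmodType) (G : V -> M) :
  \sum_(y | y != vroot) G (vparent y) = \sum_x G x *+ nchildren x.
Proof.
rewrite (partition_big vparent xpredT) //=; apply: eq_bigr => x _.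
rewrite -card_children -sumr_const; apply: eq_big => [y|y /andP[_ /eqP->]] //.
by rewrite inE.
Qed.

Lemma card_Vn_ge : (0 < k)%N -> (n.+1 <= #|V|)%N.
Proof.
move=> k_gt0.
have cw i : cayley_word (nseq i (ord0 : 'I_k.+1)).
  by elim: i => // i IH; rewrite [nseq _ _]/= cayley_word_cons IH k_gt0 orbT.
have Hs (i : 'I_n.+1) : (size (nseq i (ord0 : 'I_k.+1)) <= n)%N.
  by rewrite size_nseq -ltnS ltn_ord.
pose line (i : 'I_n.+1) : V := mkV (Hs i) (cw i).
have line_inj : injective line.
  by move=> i j /(congr1 (fun x => size (vword x))); rewrite /= !size_nseq => /val_inj.
by have := leq_card line line_inj; rewrite card_ord.
Qed.

End CayleyBall.

Section SpinSums.
Variables (R : numFieldType) (T : finType).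
Local Notation config := {ffun T -> bool}.

Definition flip (y : T) (s : config) : config :=
  [ffun z => if z == y then ~~ s z else s z].

Lemma flipK y : involutive (flip y).
Proof.
by move=> s; apply/ffunP => z; rewrite !ffunE; case: eqP => // _; rewrite negbK.
Qed.

Lemma flip_at y s : flip y s y = ~~ s y.
Proof. by rewrite ffunE eqxx. Qed.

Lemma flip_off y s z : z != y -> flip y s z = s z.
Proof. by rewrite ffunE => /negbTE ->. Qed.

Lemma sum_flip_half y (F : config -> R) :
  \sum_s F s = (\sum_s (F s + F (flip y s))) / 2.
Proof.
rewrite big_split /=.
have -> : \sum_s F (flip y s) = \sum_s F s.
  by rewrite (reindex_inj (inv_inj (flipK y))); under eq_bigr do rewrite flipK.
by rewrite mulrDl -splitr.
Qed.

Lemma sum_spin_at y (g : bool -> R) :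
  \sum_(s : config) g (s y) = 2 ^+ #|T|.-1 * (g true + g false).
Proof.
have T_gt0 : (0 < #|T|)%N by apply/card_gt0P; exists y.
have pair (s : config) : g (s y) + g (flip y s y) = g true + g false.
  by rewrite flip_at; case: (s y); rewrite // addrC.
rewrite (sum_flip_half y); under eq_bigr do rewrite pair.
rewrite sumr_const card_ffun card_bool -[_ *+ _]mulr_natl natrX -[in LHS](prednK T_gt0) exprS.
by field.
Qed.

Section Tree.
Variables (r : T) (parent : T -> T) (depth : T -> nat).
Hypothesis depth_parent : forall y, y != r -> (depth (parent y) < depth y)%N.
Variables (psi : bool -> bool -> R) (a : R).
Hypothesis psi_sum : forall b, psi b true + psi b false = a.

Lemma sum_leaf p y (G : config -> R) : p != y ->
  (forall s, G (flip y s) = G s) ->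
  \sum_(s : config) psi (s p) (s y) * G s = a / 2 * \sum_s G s.
Proof.
move=> py G_flip; rewrite [LHS](sum_flip_half y) [RHS]mulrAC mulr_sumr.
congr (_ / 2); apply: eq_bigr => s _.
rewrite G_flip flip_at flip_off // -mulrDl -(psi_sum (s p)).
by case: (s y); rewrite // addrC.
Qed.

Lemma sum_tree (g : bool -> R) (A : {set T}) : r \notin A ->
  \sum_(s : config) (\prod_(y in A) psi (s (parent y)) (s y)) * g (s r)
  = (a / 2) ^+ #|A| * \sum_(s : config) g (s r).
Proof.
move hA: #|A| => m; elim: m A hA => [|m IH] A hA rA.
  move/eqP: hA; rewrite cards_eq0 => /eqP ->.
  by rewrite mul1r; apply: eq_bigr => s _; rewrite big_set0 mul1r.
have [y0 y0A] : exists y0, y0 \in A by apply/set0Pn; rewrite -cards_eq0 hA.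
(* Sum out the spin at a deepest vertex y of A: no other vertex of A has y as parent. *)
case: (@arg_maxnP _ y0 (mem A) depth y0A) => y yA' ymax.
have yA : y \in A by [].
have card_Ay : #|A :\ y| = m by move: hA; rewrite (cardsD1 y) yA => -[].
have yr : y != r by apply: contraNneq rA => <-.
have rA' : r \notin A :\ y by rewrite !inE negb_and rA orbT.
under eq_bigr => s _ do rewrite (big_setD1 y yA) /= -mulrA.
rewrite sum_leaf.
- by rewrite IH // exprS mulrA.
- by apply: contraTneq (depth_parent yr) => ->; rewrite ltnn.
- move=> s; rewrite flip_off 1?eq_sym //; congr (_ * _).
  apply: eq_bigr => z; rewrite !inE => /andP[zy zA].
  have zr : z != r by apply: contraNneq rA => <-.
  rewrite !flip_off //; apply: contraTneq (depth_parent zr) => ->.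
  by rewrite -leqNgt; apply: ymax.
Qed.

Lemma sum_tree_rooted (g : bool -> R) :
  \sum_(s : config) (\prod_(y | y != r) psi (s (parent y)) (s y)) * g (s r)
  = a ^+ #|T|.-1 * (g true + g false).
Proof.
transitivity (\sum_(s : config) (\prod_(y in [set~ r]) psi (s (parent y)) (s y)) * g (s r)).
  by apply: eq_bigr => s _; congr (_ * _); apply: eq_bigl => y; rewrite !inE.
rewrite sum_tree ?inE ?eqxx // cardsC1 (sum_spin_at r) mulrA -exprMn divfK //.
Qed.
End Tree.
End SpinSums.

Section BallEnergy.
Variables (R : realType) (k n : nat) (beta J B h f : R).
Hypothesis h_eq : h = k%:R * f.
Hypothesis n_gt0 : (0 < n)%N.
Local Notation V := (Vn k n).
Local Notation r := (vroot k n).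

Definition edge_weight (b c : bool) : R :=
  beta * J * (spin b * spin c) + (h + beta * B) * spin c - f * spin b.

(* Each child contributes [-f] to the field at its parent; with [h = k f] this
   cancels the boundary field [h] everywhere except at the root. *)
Lemma site_field_split (x : V) (t : R) :
  beta * B * t + (if size (vword x) == n then h * t else 0) =
  (if x != r then (h + beta * B) * t else 0) - (f * t) *+ nchildren x
  + (if x == r then (beta * B + h + f) * t else 0).
Proof.
rewrite /nchildren vword_eq0; case: (eqVneq x r) => [-> | xr] /=.
  by rewrite eq_sym (gtn_eqF n_gt0) n_gt0 -mulr_natr h_eq; ring.
have := size_vword x; rewrite leq_eqVlt => /orP[/eqP -> | lt_x_n].
  by rewrite eqxx ltnn; ring.
by rewrite lt_x_n (ltn_eqF lt_x_n) -mulr_natr h_eq; ring.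
Qed.

Lemma sum_site_fields (s : {ffun V -> bool}) :
  beta * B * (\sum_(x : V) spin (s x))
  + \sum_(x : V | size (vword x) == n) h * spin (s x)
  = \sum_(y | y != r) (h + beta * B) * spin (s y)
    - \sum_x (f * spin (s x)) *+ nchildren x
    + (beta * B + h + f) * spin (s r).
Proof.
rewrite mulr_sumr [X in _ + X]big_mkcond -big_split /=.
under eq_bigr do rewrite site_field_split.
by rewrite !big_split /= sumrN -!big_mkcond /= big_pred1_eq.
Qed.

Lemma hamiltonian_tree (s : {ffun V -> bool}) :
  beta * J * (\sum_(x : V) \sum_(y : V | cayley_child (vword x) (vword y))
                spin (s x) * spin (s y))
  + beta * B * (\sum_(x : V) spin (s x))
  + \sum_(x : V | size (vword x) == n) h * spin (s x)
  = \sum_(y | y != r) edge_weight (s (vparent y)) (s y)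
    + (beta * B + h + f) * spin (s r).
Proof.
rewrite -addrA sum_site_fields sum_edges /edge_weight !big_split /= sumrN.
rewrite (sum_over_parents (fun x => f * spin (s x))) -!mulr_sumr.
ring.
Qed.

Lemma Zn_tree : Zn k beta J B (fun _ => h) n =
  \sum_(s : {ffun V -> bool})
     (\prod_(y | y != r) expR (edge_weight (s (vparent y)) (s y)))
     * expR ((beta * B + h + f) * spin (s r)).
Proof. by apply: eq_bigr => s _; rewrite hamiltonian_tree expRD expR_sum. Qed.

End BallEnergy.

Section Hyperbolic.
Variable R : realType.
Implicit Types x y : R.

Lemma cosh_gt0 x : 0 < cosh x.
Proof. by rewrite /cosh divr_gt0 ?addr_gt0 ?expR_gt0. Qed.

Lemma cosh_addE x y : cosh (x + y) = cosh x * cosh y * (1 + tanh x * tanh y).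
Proof.
have ex := expR_gt0 x; have ey := expR_gt0 y.
rewrite /cosh /tanh opprD !expRD !expRN; field.
by rewrite !gt_eqF ?addr_gt0 ?mulr_gt0.
Qed.

Lemma cosh_subE x y : cosh (x - y) = cosh x * cosh y * (1 - tanh x * tanh y).
Proof.
have ex := expR_gt0 x; have ey := expR_gt0 y.
rewrite /cosh /tanh opprD opprK !expRD !expRN; field.
by rewrite !gt_eqF ?addr_gt0 ?mulr_gt0.
Qed.

Lemma expR_f_theta_tanh x y :
  expR (2 * f_theta (tanh x) y) * cosh (y - x) = cosh (y + x).
Proof.
have cxy : 0 < cosh y * cosh x by rewrite mulr_gt0 ?cosh_gt0.
have p_sub : 0 < 1 - tanh x * tanh y.
  by rewrite -(pmulr_rgt0 _ cxy) [tanh x * _]mulrC -cosh_subE cosh_gt0.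
have p_add : 0 < 1 + tanh x * tanh y.
  by rewrite -(pmulr_rgt0 _ cxy) [tanh x * _]mulrC -cosh_addE cosh_gt0.
rewrite /f_theta /artanh [2 * _]mulrC divfK // lnK ?posrE ?divr_gt0 //.
rewrite cosh_subE cosh_addE [tanh y * _]mulrC; field.
by rewrite gt_eqF.
Qed.

End Hyperbolic.

Section FreeEnergy.
Variables (R : realType) (k : nat) (beta J B h : R).
Let H := h + beta * B.
Let f := f_theta (tanh (beta * J)) H.
Let psi (b c : bool) : R := expR (edge_weight beta J B h f b c).

Lemma expR_add_cosh (c z : R) : expR (c + z) + expR (c - z) = 2 * expR c * cosh z.
Proof. by rewrite /cosh !expRD; field. Qed.

Definition leaf_weight : R := 2 * expR (- f) * cosh (H + beta * J).

Lemma leaf_weightE : leaf_weight = 2 * expR f * cosh (H - beta * J).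
Proof.
rewrite /leaf_weight -(expR_f_theta_tanh (beta * J) H) -/f mulrA -[2 * _ * _]mulrA.
by rewrite -expRD; congr (2 * expR _ * _); ring.
Qed.

(* This is where the fixed-point equation enters: summing out a leaf spin
   gives a factor independent of the spin of its parent. *)
Lemma psi_sum b : psi b true + psi b false = leaf_weight.
Proof.
rewrite /psi /edge_weight /spin -/H; case: b.
  rewrite [X in expR X + _](_ : _ = - f + (H + beta * J)); last by ring.
  rewrite [X in _ + expR X](_ : _ = - f - (H + beta * J)); last by ring.
  exact: expR_add_cosh.
rewrite [X in expR X + _](_ : _ = f + (H - beta * J)); last by ring.
rewrite [X in _ + expR X](_ : _ = f - (H - beta * J)); last by ring.
by rewrite expR_add_cosh leaf_weightE.
Qed.

Lemma leaf_weight_gt0 : 0 < leaf_weight.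
Proof. by rewrite /leaf_weight mulr_gt0 ?cosh_gt0 // mulr_gt0 ?expR_gt0. Qed.

Lemma leaf_weight_sq :
  leaf_weight ^+ 2 = 4 * cosh (h + beta * (B + J)) * cosh (h + beta * (B - J)).
Proof.
rewrite expr2 {1}leaf_weightE /leaf_weight.
rewrite (_ : H + beta * J = h + beta * (B + J)); last by rewrite /H; ring.
rewrite (_ : H - beta * J = h + beta * (B - J)); last by rewrite /H; ring.
have := expR_gt0 f; rewrite expRN => ef_gt0; field.
by rewrite gt_eqF.
Qed.

Hypothesis fixed_point : h = k%:R * f.

Let K := beta * B + h + f.

Lemma Zn_closed n : (0 < n)%N ->
  Zn k beta J B (fun _ => h) n = leaf_weight ^+ #|Vn k n|.-1 * (expR K + expR (- K)).
Proof.
move=> n_gt0; rewrite (Zn_tree beta J B fixed_point n_gt0).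
rewrite (sum_tree_rooted (depth := fun x => size (vword x)) (@size_vparent_lt k n)
           psi_sum (fun b => expR (K * spin b))).
by rewrite /spin mulr1 mulrN1.
Qed.

End FreeEnergy.

Local Open Scope classical_set_scope.
Local Open Scope ring_scope.

Lemma cvg_affine_div (R : realType) (N : nat -> nat) (u : nat -> R) (l c beta : R) :
  beta != 0 -> (N n @[n --> \oo] --> \oo) ->
  (\forall n \near \oo, u n = (N n)%:R * l + c) ->
  (fun n : nat => u n / (beta * (N n)%:R)) @ \oo --> l / beta.
Proof.
move=> beta_neq0 N_oo u_eq.
have N_gt0 : \forall n \near \oo, (0 < N n)%N.
  exact: (proj1 (cvgnyPgt N) N_oo 0%N).
have N_inv : (fun n => ((N n)%:R : R)^-1) @ \oo --> 0.
  apply/gtr0_cvgV0; first by near do rewrite ltr0n.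
  exact/cvgrnyP.
have lim : (fun n => l / beta + c / beta * ((N n)%:R)^-1) @ \oo --> l / beta.
  rewrite -[X in _ --> X]addr0 -(mulr0 (c / beta)).
  by apply: cvgD; [exact: cvg_cst | apply: cvgM; [exact: cvg_cst | exact: N_inv]].
apply: cvg_trans lim; apply: near_eq_cvg; near=> n.
rewrite (near u_eq n) //; field.
by rewrite beta_neq0 pnatr_eq0 -lt0n (near N_gt0 n).
Unshelve. all: by end_near.
Qed.

Lemma card_Vn_cvgn (k : nat) : (0 < k)%N -> #|Vn k n| @[n --> \oo] --> \oo.
Proof.
move=> k_gt0; apply/cvgnyPge => A; near=> n.
apply: leq_trans (card_Vn_ge n k_gt0); apply: leqW.
by near: n; apply: nbhs_infty_ge.
Unshelve. all: by end_near.
Qed.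

Theorem proposition2 (R : realType) (k : nat) (beta J B h : R) :
  (2 <= k)%N -> 0 < beta ->
  h = k%:R * f_theta (tanh (beta * J)) (h + beta * B) ->
  (fun n : nat => - (ln (Zn k beta J B (fun _ => h) n) / (beta * #|{: Vn k n}|%:R)))
    @ \oo --> - (ln (4 * cosh (h + beta * (B + J)) * cosh (h + beta * (B - J))) / (2 * beta)).
Proof.
move=> k_ge2 beta_gt0 fixed_point.
have k_gt0 : (0 < k)%N by apply: leq_trans k_ge2.
have a_gt0 := leaf_weight_gt0 beta J B h.
set a := leaf_weight beta J B h in a_gt0 *.
set K := beta * B + h + f_theta (tanh (beta * J)) (h + beta * B).
rewrite -leaf_weight_sq -/a lnXn //.
rewrite (_ : ln a *+ 2 / (2 * beta) = ln a / beta); last by field; rewrite gt_eqF.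
apply: cvgN; apply: (cvg_affine_div (N := fun n => #|Vn k n|)
                       (c := ln (expR K + expR (- K)) - ln a)).
- by rewrite gt_eqF.
- exact: card_Vn_cvgn.
- near=> n.
  have n_gt0 : (0 < n)%N by near: n; apply: nbhs_infty_ge.
  have card_gt0 : (0 < #|Vn k n|)%N := leq_trans (ltn0Sn n) (card_Vn_ge n k_gt0).
  rewrite (Zn_closed fixed_point n_gt0) lnM ?posrE ?exprn_gt0 ?addr_gt0 ?expR_gt0 //.
  rewrite lnXn // -[in RHS](prednK card_gt0) -mulr_natl; ring.
Unshelve. all: by end_near.
Qed.
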